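(* Let $x_1,x_2,x_3,x_4\in\mathbb{Z}^3$ be the vertices of a Fano tetrahedron, and let $\lambda_1,\ldots,\lambda_4$ be non-negative integers with $\gcd(\lambda_1,\ldots,\lambda_4)=1$ such that, with $h=\lambda_1+\cdots+\lambda_4$, $\sum_i\lambda_ix_i=0$ (so $\lambda_i/h$ are the barycentric coordinates of the origin). Then (i) $\sum_{i=1}^4\left\lceil\frac{\kappa\lambda_i}{h}\right\rceil=\kappa+2$ for all integers $\kappa\in\{2,\ldots,h-2\}$, and (ii) $\gcd(\lambda_i,h)=1$ for $i=1,\ldots,4$.
   Context: A tetrahedron is called Fano if its vertices lie in $\mathbb{Z}^3$ and the only lattice point it contains other than its vertices is the origin, which lies strictly in its interior. $\lceil q\rceil=\min\{a\in\mathbb{Z}: a\ge q\}$. *)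

From Stdlib Require Import ZArith Reals QArith Qround.

Definition pt := (Z * Z * Z)%type.
Definition cx (p : pt) : Z := fst (fst p).
Definition cy (p : pt) : Z := snd (fst p).
Definition cz (p : pt) : Z := snd p.

Definition in_hull (x1 x2 x3 x4 : pt) (a b c : R) : Prop :=
  exists m1 m2 m3 m4 : R,
    (0 <= m1)%R /\ (0 <= m2)%R /\ (0 <= m3)%R /\ (0 <= m4)%R /\
    (m1 + m2 + m3 + m4 = 1)%R /\
    a = (m1 * IZR (cx x1) + m2 * IZR (cx x2) + m3 * IZR (cx x3) + m4 * IZR (cx x4))%R /\
    b = (m1 * IZR (cy x1) + m2 * IZR (cy x2) + m3 * IZR (cy x3) + m4 * IZR (cy x4))%R /\
    c = (m1 * IZR (cz x1) + m2 * IZR (cz x2) + m3 * IZR (cz x3) + m4 * IZR (cz x4))%R.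

Definition lattice_in_hull (x1 x2 x3 x4 : pt) (p : pt) : Prop :=
  in_hull x1 x2 x3 x4 (IZR (cx p)) (IZR (cy p)) (IZR (cz p)).

Definition origin_in_interior (x1 x2 x3 x4 : pt) : Prop :=
  exists eps : R, (0 < eps)%R /\
    forall a b c : R, (Rabs a < eps)%R -> (Rabs b < eps)%R -> (Rabs c < eps)%R ->
      in_hull x1 x2 x3 x4 a b c.

Definition sub (p q : pt) : pt := (cx p - cx q, cy p - cy q, cz p - cz q)%Z.

Definition det3 (u v w : pt) : Z :=
  (cx u * (cy v * cz w - cz v * cy w)
   - cy u * (cx v * cz w - cz v * cx w)
   + cz u * (cx v * cy w - cy v * cx w))%Z.

Definition nondegenerate (x1 x2 x3 x4 : pt) : Prop :=
  det3 (sub x2 x1) (sub x3 x1) (sub x4 x1) <> 0%Z.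

Definition origin : pt := (0, 0, 0)%Z.

Definition fano_tetrahedron (x1 x2 x3 x4 : pt) : Prop :=
  nondegenerate x1 x2 x3 x4 /\
  origin_in_interior x1 x2 x3 x4 /\
  forall p : pt, lattice_in_hull x1 x2 x3 x4 p ->
    p = origin \/ p = x1 \/ p = x2 \/ p = x3 \/ p = x4.

Definition ceil_frac (n h : Z) : Z := Qceiling (inject_Z n / inject_Z h)%Q.

From Stdlib Require Import ZArith Reals QArith Qround Lia Lra.

(* Since the vertices are affinely independent, an integer relation
   m1 x1 + m2 x2 + m3 x3 + m4 x4 = 0 is the relation l scaled by M / h, where M is its
   coefficient sum; as gcd(l) = 1, this forces h | M.  The origin being interior makes every
   l_i positive.  For 2 <= kappa <= h - 2 let a_i = ceil(kappa l_i / h).  If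
   a_1 + ... + a_4 <= kappa + 1, adding a multiple of l writes h (a_1 x1 + ... + a_4 x4) with
   nonnegative weights summing to h, so this lattice point lies in the tetrahedron; it is then 0
   or a vertex, which yields a relation with coefficient sum strictly between 0 and h.  Hence
   the ceilings sum to at least kappa + 2.  Since
   ceil(kappa l / h) + ceil((h - kappa) l / h) <= l + 1, the bounds for kappa and h - kappa
   force equality everywhere, giving (i).  If d = gcd(l_i, h) > 1, then kappa = h / d makes
   both ceilings exact, with sum l_i instead of l_i + 1, giving (ii). *)

Local Open Scope Z_scope.

Lemma ceil_frac_div n h : 0 < h -> ceil_frac n h = - (- n / h).
Proof.
  intros Hh; destruct h as [|p|p]; try lia.
  unfold ceil_frac, Qceiling, Qfloor, Qdiv, Qmult, Qinv, inject_Z; simpl.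
  now rewrite Z.mul_1_r.
Qed.

Lemma ceil_frac_spec n h : 0 < h -> h * ceil_frac n h - h < n <= h * ceil_frac n h.
Proof.
  intros Hh; rewrite ceil_frac_div by exact Hh.
  pose proof (Z.div_mod (- n) h ltac:(lia)); pose proof (Z.mod_pos_bound (- n) h Hh); lia.
Qed.

Lemma ceil_frac_mul e h : 0 < h -> ceil_frac (h * e) h = e.
Proof.
  intros Hh; rewrite ceil_frac_div by exact Hh.
  replace (- (h * e)) with (- e * h) by ring; rewrite Z.div_mul; lia.
Qed.

Lemma ceil_frac_complement_le h k l : 0 < h ->
  ceil_frac (k * l) h + ceil_frac ((h - k) * l) h <= l + 1.
Proof.
  intros Hh.
  pose proof (ceil_frac_spec (k * l) h Hh); pose proof (ceil_frac_spec ((h - k) * l) h Hh).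
  apply Z.lt_succ_r, (Z.mul_lt_mono_pos_l h); lia.
Qed.

Lemma gcd_eq1_of_ceil_complement l h : 0 < l < h -> 4 <= h ->
  (forall k, 2 <= k <= h - 2 -> ceil_frac (k * l) h + ceil_frac ((h - k) * l) h = l + 1) ->
  Z.gcd l h = 1.
Proof.
  intros Hl Hh Hceil.
  destruct (Z.gcd_divide_l l h) as [e He], (Z.gcd_divide_r l h) as [k Hk].
  set (d := Z.gcd l h) in *.
  assert (0 <= d) by apply Z.gcd_nonneg.
  destruct (Z.eq_dec d 1) as [|Hd]; [assumption | exfalso].
  assert (d <> 0) by (intros E; rewrite E in Hk; lia).
  assert (e < k) by nia.
  assert (Hk2 : 2 <= k <= h - 2) by nia.
  specialize (Hceil k Hk2).
  replace (k * l) with (h * e) in Hceil by (rewrite He, Hk; ring).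
  replace ((h - k) * l) with (h * (l - e)) in Hceil by (rewrite He, Hk; ring).
  rewrite !ceil_frac_mul in Hceil by lia; lia.
Qed.

Lemma divide_mul_gcd h M a b : (h | M * a) -> (h | M * b) -> (h | M * Z.gcd a b).
Proof.
  intros Ha Hb; destruct (Z.gcd_bezout a b _ eq_refl) as [u [v <-]].
  replace (M * (u * a + v * b)) with (u * (M * a) + v * (M * b)) by ring.
  apply Z.divide_add_r; apply Z.divide_mul_r; assumption.
Qed.

Lemma cramer3 (ux uy uz vx vy vz wx wy wz a b c : R) :
  (ux * (vy * wz - vz * wy) - uy * (vx * wz - vz * wx) + uz * (vx * wy - vy * wx) <> 0)%R ->
  (a * ux + b * vx + c * wx = 0)%R -> (a * uy + b * vy + c * wy = 0)%R ->
  (a * uz + b * vz + c * wz = 0)%R -> a = 0%R /\ b = 0%R /\ c = 0%R.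
Proof.
  set (d := (ux * (vy * wz - vz * wy) - uy * (vx * wz - vz * wx) + uz * (vx * wy - vy * wx))%R).
  intros Hd Ex Ey Ez.
  assert (Hcancel : forall r, (r * d = 0)%R -> r = 0%R).
  { intros r Hr; destruct (Rmult_integral _ _ Hr); [assumption | contradiction]. }
  (* a d, b d, c d are the dot products of a u + b v + c w with v x w, w x u, u x v *)
  repeat split; apply Hcancel.
  - transitivity ((a * ux + b * vx + c * wx) * (vy * wz - vz * wy)
      + (a * uy + b * vy + c * wy) * (vz * wx - vx * wz)
      + (a * uz + b * vz + c * wz) * (vx * wy - vy * wx))%R;
      [unfold d; ring | rewrite Ex, Ey, Ez; ring].
  - transitivity ((a * ux + b * vx + c * wx) * (wy * uz - wz * uy)
      + (a * uy + b * vy + c * wy) * (wz * ux - wx * uz)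
      + (a * uz + b * vz + c * wz) * (wx * uy - wy * ux))%R;
      [unfold d; ring | rewrite Ex, Ey, Ez; ring].
  - transitivity ((a * ux + b * vx + c * wx) * (uy * vz - uz * vy)
      + (a * uy + b * vy + c * wy) * (uz * vx - ux * vz)
      + (a * uz + b * vz + c * wz) * (ux * vy - uy * vx))%R;
      [unfold d; ring | rewrite Ex, Ey, Ez; ring].
Qed.

Lemma exists_small_multiple (eps a b c : R) : (0 < eps)%R ->
  exists t, (0 < t /\ Rabs (t * a) < eps /\ Rabs (t * b) < eps /\ Rabs (t * c) < eps)%R.
Proof.
  intros Heps.
  set (D := (1 + Rabs a + Rabs b + Rabs c)%R).
  pose proof (Rabs_pos a); pose proof (Rabs_pos b); pose proof (Rabs_pos c).
  assert (HD : (0 < D)%R) by (unfold D; lra).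
  exists (eps / D)%R.
  assert (Ht : (0 < eps / D)%R) by (apply Rdiv_lt_0_compat; assumption).
  assert (HtD : (eps / D * D = eps)%R) by (field; lra).
  rewrite !Rabs_mult, (Rabs_pos_eq (eps / D)) by lra.
  repeat split; [assumption | ..]; rewrite <- HtD at 2;
    apply Rmult_lt_compat_l; try assumption; unfold D; lra.
Qed.

Section Tetrahedron.

Variables x1 x2 x3 x4 : pt.

Definition zcomb (f : pt -> Z) (m1 m2 m3 m4 : Z) : Z :=
  m1 * f x1 + m2 * f x2 + m3 * f x3 + m4 * f x4.

Definition rcomb (f : pt -> Z) (m1 m2 m3 m4 : R) : R :=
  (m1 * IZR (f x1) + m2 * IZR (f x2) + m3 * IZR (f x3) + m4 * IZR (f x4))%R.

Definition comb (m1 m2 m3 m4 : Z) : pt :=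
  (zcomb cx m1 m2 m3 m4, zcomb cy m1 m2 m3 m4, zcomb cz m1 m2 m3 m4).

Definition is_relation (m1 m2 m3 m4 : Z) : Prop :=
  zcomb cx m1 m2 m3 m4 = 0 /\ zcomb cy m1 m2 m3 m4 = 0 /\ zcomb cz m1 m2 m3 m4 = 0.

Lemma IZR_zcomb f m1 m2 m3 m4 :
  IZR (zcomb f m1 m2 m3 m4) = rcomb f (IZR m1) (IZR m2) (IZR m3) (IZR m4).
Proof. unfold zcomb, rcomb; now rewrite !plus_IZR, !mult_IZR. Qed.

Lemma zcomb_lin f a b m1 m2 m3 m4 n1 n2 n3 n4 :
  zcomb f (a * m1 + b * n1) (a * m2 + b * n2) (a * m3 + b * n3) (a * m4 + b * n4)
  = a * zcomb f m1 m2 m3 m4 + b * zcomb f n1 n2 n3 n4.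
Proof. unfold zcomb; ring. Qed.

Lemma comb_zero : comb 0 0 0 0 = origin.
Proof. reflexivity. Qed.

Lemma comb_vertices :
  comb 1 0 0 0 = x1 /\ comb 0 1 0 0 = x2 /\ comb 0 0 1 0 = x3 /\ comb 0 0 0 1 = x4.
Proof.
  unfold comb, zcomb.
  destruct x1 as [[? ?] ?], x2 as [[? ?] ?], x3 as [[? ?] ?], x4 as [[? ?] ?]; cbn [cx cy cz fst snd].
  repeat split; repeat f_equal; ring.
Qed.

Lemma is_relation_of_comb_eq m1 m2 m3 m4 n1 n2 n3 n4 :
  comb m1 m2 m3 m4 = comb n1 n2 n3 n4 -> is_relation (m1 - n1) (m2 - n2) (m3 - n3) (m4 - n4).
Proof.
  unfold comb; intros E; injection E as Ex Ey Ez.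
  unfold is_relation, zcomb in *; repeat split; lia.
Qed.

Lemma lattice_in_hull_of_weights (N1 N2 N3 N4 H px py pz : Z) :
  0 < H -> 0 <= N1 -> 0 <= N2 -> 0 <= N3 -> 0 <= N4 -> N1 + N2 + N3 + N4 = H ->
  zcomb cx N1 N2 N3 N4 = H * px -> zcomb cy N1 N2 N3 N4 = H * py ->
  zcomb cz N1 N2 N3 N4 = H * pz -> lattice_in_hull x1 x2 x3 x4 (px, py, pz).
Proof.
  intros HH P1 P2 P3 P4 Hsum Hx Hy Hz.
  apply IZR_lt in HH.
  assert (Hcoord : forall f q, zcomb f N1 N2 N3 N4 = H * q ->
    IZR q = rcomb f (IZR N1 / IZR H) (IZR N2 / IZR H) (IZR N3 / IZR H) (IZR N4 / IZR H)).
  { intros f q Hf.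
    transitivity (IZR (zcomb f N1 N2 N3 N4) / IZR H)%R.
    - rewrite Hf, mult_IZR; field; lra.
    - rewrite IZR_zcomb; unfold rcomb; field; lra. }
  apply (f_equal IZR) in Hsum; rewrite !plus_IZR in Hsum.
  exists (IZR N1 / IZR H)%R, (IZR N2 / IZR H)%R, (IZR N3 / IZR H)%R, (IZR N4 / IZR H)%R.
  repeat split; try (apply Hcoord; assumption);
    try (apply Rle_mult_inv_pos; [apply IZR_le |]; assumption).
  unfold Rdiv; rewrite <- !Rmult_plus_distr_r, Hsum; apply Rinv_r; lra.
Qed.

Hypothesis nondeg : nondegenerate x1 x2 x3 x4.

Lemma rcomb_affine_indep (n1 n2 n3 n4 : R) : (n1 + n2 + n3 + n4 = 0)%R ->
  rcomb cx n1 n2 n3 n4 = 0%R -> rcomb cy n1 n2 n3 n4 = 0%R -> rcomb cz n1 n2 n3 n4 = 0%R ->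
  n1 = 0%R /\ n2 = 0%R /\ n3 = 0%R /\ n4 = 0%R.
Proof.
  intros Hsum Hx Hy Hz.
  assert (E1 : n1 = (- (n2 + n3 + n4))%R) by lra; subst n1.
  unfold rcomb in Hx, Hy, Hz.
  destruct (cramer3 (IZR (cx x2) - IZR (cx x1)) (IZR (cy x2) - IZR (cy x1)) (IZR (cz x2) - IZR (cz x1))
                    (IZR (cx x3) - IZR (cx x1)) (IZR (cy x3) - IZR (cy x1)) (IZR (cz x3) - IZR (cz x1))
                    (IZR (cx x4) - IZR (cx x1)) (IZR (cy x4) - IZR (cy x1)) (IZR (cz x4) - IZR (cz x1))
                    n2 n3 n4) as (E2 & E3 & E4).
  - intros E; apply nondeg, eq_IZR; unfold det3, sub; cbn [cx cy cz fst snd].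
    repeat first [rewrite plus_IZR | rewrite minus_IZR | rewrite mult_IZR]; lra.
  - rewrite <- Hx; ring.
  - rewrite <- Hy; ring.
  - rewrite <- Hz; ring.
  - subst; repeat split; ring.
Qed.

Lemma relation_affine_indep n1 n2 n3 n4 : n1 + n2 + n3 + n4 = 0 ->
  is_relation n1 n2 n3 n4 -> n1 = 0 /\ n2 = 0 /\ n3 = 0 /\ n4 = 0.
Proof.
  intros Hsum (Hx & Hy & Hz).
  destruct (rcomb_affine_indep (IZR n1) (IZR n2) (IZR n3) (IZR n4)) as (E1 & E2 & E3 & E4);
    try (rewrite <- IZR_zcomb; now apply f_equal).
  - now rewrite <- !plus_IZR, Hsum.
  - now repeat split; apply eq_IZR.
Qed.

Variables l1 l2 l3 l4 : Z.

Local Notation h := (l1 + l2 + l3 + l4).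

Hypothesis l_rel : is_relation l1 l2 l3 l4.

Lemma relation_proportional m1 m2 m3 m4 : is_relation m1 m2 m3 m4 ->
  let M := m1 + m2 + m3 + m4 in
  h * m1 = M * l1 /\ h * m2 = M * l2 /\ h * m3 = M * l3 /\ h * m4 = M * l4.
Proof.
  intros Hm M.
  destruct (relation_affine_indep (h * m1 + - M * l1) (h * m2 + - M * l2)
              (h * m3 + - M * l3) (h * m4 + - M * l4)) as (E1 & E2 & E3 & E4).
  - unfold M; ring.
  - destruct Hm as (Hx & Hy & Hz), l_rel as (Lx & Ly & Lz).
    unfold is_relation; rewrite !zcomb_lin, Hx, Hy, Hz, Lx, Ly, Lz; repeat split; ring.
  - lia.
Qed.

Hypothesis l_primitive : Z.gcd (Z.gcd (Z.gcd l1 l2) l3) l4 = 1.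

Lemma relation_sum_divisible m1 m2 m3 m4 : is_relation m1 m2 m3 m4 -> (h | m1 + m2 + m3 + m4).
Proof.
  intros Hm; destruct (relation_proportional _ _ _ _ Hm) as (E1 & E2 & E3 & E4).
  rewrite <- (Z.mul_1_r (m1 + m2 + m3 + m4)), <- l_primitive.
  repeat apply divide_mul_gcd; [exists m1 | exists m2 | exists m3 | exists m4]; lia.
Qed.

Lemma no_relation_of_smaller_sum m1 m2 m3 m4 : is_relation m1 m2 m3 m4 ->
  ~ 0 < m1 + m2 + m3 + m4 < h.
Proof.
  intros Hm Hlt.
  pose proof (Z.divide_pos_le _ _ (proj1 Hlt) (relation_sum_divisible _ _ _ _ Hm)); lia.
Qed.

Hypotheses (l1_nonneg : 0 <= l1) (l2_nonneg : 0 <= l2) (l3_nonneg : 0 <= l3) (l4_nonneg : 0 <= l4).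

Lemma relation_sum_pos : 0 < h.
Proof.
  destruct (Z.lt_ge_cases 0 h) as [| Hh]; [assumption | exfalso].
  assert (l1 = 0 /\ l2 = 0 /\ l3 = 0 /\ l4 = 0) as (E1 & E2 & E3 & E4) by lia.
  rewrite E1, E2, E3, E4 in l_primitive; discriminate.
Qed.

Lemma relation_pos_of_interior : origin_in_interior x1 x2 x3 x4 ->
  0 < l1 /\ 0 < l2 /\ 0 < l3 /\ 0 < l4.
Proof.
  intros (eps & Heps & Hball).
  destruct (exists_small_multiple eps (rcomb cx 1 1 1 1) (rcomb cy 1 1 1 1) (rcomb cz 1 1 1 1) Heps)
    as (t & Ht & Bx & By & Bz).
  rewrite <- Rabs_Ropp in Bx, By, Bz.
  destruct (Hball _ _ _ Bx By Bz) as (m1 & m2 & m3 & m4 & P1 & P2 & P3 & P4 & Hm & Ex & Ey & Ez).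
  pose proof relation_sum_pos as Hh; apply IZR_lt in Hh.
  set (H := IZR h) in *.
  (* the same point - t (x1 + x2 + x3 + x4) has barycentric coordinates (1 + 4 t) l_i / h - t *)
  set (n m l := (H * m - (1 + 4 * t) * IZR l + H * t)%R).
  assert (Hcoord : forall f, zcomb f l1 l2 l3 l4 = 0 ->
    rcomb f m1 m2 m3 m4 = (- (t * rcomb f 1 1 1 1))%R ->
    rcomb f (n m1 l1) (n m2 l2) (n m3 l3) (n m4 l4) = 0%R).
  { intros f Hl Hf.
    transitivity (H * rcomb f m1 m2 m3 m4 - (1 + 4 * t) * IZR (zcomb f l1 l2 l3 l4)
                  + H * t * rcomb f 1 1 1 1)%R;
      [rewrite IZR_zcomb; unfold rcomb, n; ring | rewrite Hl, Hf; ring]. }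
  destruct l_rel as (Lx & Ly & Lz).
  destruct (rcomb_affine_indep (n m1 l1) (n m2 l2) (n m3 l3) (n m4 l4)) as (E1 & E2 & E3 & E4);
    [| apply Hcoord; [assumption | symmetry; assumption] .. |].
  - transitivity (H * (m1 + m2 + m3 + m4) - (1 + 4 * t) * (IZR l1 + IZR l2 + IZR l3 + IZR l4)
                  + 4 * H * t)%R;
      [unfold n; ring | rewrite Hm; unfold H; rewrite !plus_IZR; ring].
  - unfold n in *; repeat split; apply lt_IZR; nra.
Qed.

Hypothesis fano_lattice : forall p, lattice_in_hull x1 x2 x3 x4 p ->
  p = origin \/ p = x1 \/ p = x2 \/ p = x3 \/ p = x4.

Lemma relation_near_lattice_point a1 a2 a3 a4 :
  lattice_in_hull x1 x2 x3 x4 (comb a1 a2 a3 a4) ->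
  exists m1 m2 m3 m4, is_relation m1 m2 m3 m4 /\
    a1 + a2 + a3 + a4 - 1 <= m1 + m2 + m3 + m4 <= a1 + a2 + a3 + a4.
Proof.
  intros Hp; destruct comb_vertices as (V1 & V2 & V3 & V4).
  destruct (fano_lattice _ Hp) as [E | [E | [E | [E | E]]]];
    [rewrite <- comb_zero in E | rewrite <- V1 in E | rewrite <- V2 in E
    | rewrite <- V3 in E | rewrite <- V4 in E];
    apply is_relation_of_comb_eq in E; (eexists _, _, _, _; split; [exact E | lia]).
Qed.

Lemma ceil_sum_ge kappa : 2 <= kappa <= h - 2 ->
  kappa + 2 <= ceil_frac (kappa * l1) h + ceil_frac (kappa * l2) h
               + ceil_frac (kappa * l3) h + ceil_frac (kappa * l4) h.
Proof.
  intros Hk; pose proof relation_sum_pos as Hh.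
  pose proof (ceil_frac_spec (kappa * l1) h Hh) as B1.
  pose proof (ceil_frac_spec (kappa * l2) h Hh) as B2.
  pose proof (ceil_frac_spec (kappa * l3) h Hh) as B3.
  pose proof (ceil_frac_spec (kappa * l4) h Hh) as B4.
  set (a1 := ceil_frac (kappa * l1) h) in *; set (a2 := ceil_frac (kappa * l2) h) in *.
  set (a3 := ceil_frac (kappa * l3) h) in *; set (a4 := ceil_frac (kappa * l4) h) in *.
  assert (HA : kappa <= a1 + a2 + a3 + a4) by (apply (Z.mul_le_mono_pos_l _ _ h Hh); lia).
  apply Z.nlt_ge; intros Hsmall.
  set (A := a1 + a2 + a3 + a4) in *.
  (* adding (1 - A) times the relation makes the weights of h (a1 x1 + ... + a4 x4) nonnegative *)
  assert (Hp : lattice_in_hull x1 x2 x3 x4 (comb a1 a2 a3 a4)).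
  { destruct l_rel as (Lx & Ly & Lz).
    apply (lattice_in_hull_of_weights (h * a1 + (1 - A) * l1) (h * a2 + (1 - A) * l2)
             (h * a3 + (1 - A) * l3) (h * a4 + (1 - A) * l4) h);
      [lia | nia | nia | nia | nia | unfold A; ring | ..];
      rewrite zcomb_lin; [rewrite Lx | rewrite Ly | rewrite Lz]; ring. }
  destruct (relation_near_lattice_point _ _ _ _ Hp) as (m1 & m2 & m3 & m4 & Hm & HM).
  apply (no_relation_of_smaller_sum _ _ _ _ Hm); lia.
Qed.

Lemma ceil_complement_eq kappa : 2 <= kappa <= h - 2 ->
  ceil_frac (kappa * l1) h + ceil_frac ((h - kappa) * l1) h = l1 + 1 /\
  ceil_frac (kappa * l2) h + ceil_frac ((h - kappa) * l2) h = l2 + 1 /\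
  ceil_frac (kappa * l3) h + ceil_frac ((h - kappa) * l3) h = l3 + 1 /\
  ceil_frac (kappa * l4) h + ceil_frac ((h - kappa) * l4) h = l4 + 1.
Proof.
  intros Hk; pose proof relation_sum_pos as Hh.
  pose proof (ceil_sum_ge kappa Hk); pose proof (ceil_sum_ge (h - kappa) ltac:(lia)).
  pose proof (ceil_frac_complement_le h kappa l1 Hh).
  pose proof (ceil_frac_complement_le h kappa l2 Hh).
  pose proof (ceil_frac_complement_le h kappa l3 Hh).
  pose proof (ceil_frac_complement_le h kappa l4 Hh).
  lia.
Qed.

Lemma ceil_sum_eq kappa : 2 <= kappa <= h - 2 ->
  ceil_frac (kappa * l1) h + ceil_frac (kappa * l2) h
  + ceil_frac (kappa * l3) h + ceil_frac (kappa * l4) h = kappa + 2.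
Proof.
  intros Hk.
  pose proof (ceil_complement_eq kappa Hk).
  pose proof (ceil_sum_ge kappa Hk); pose proof (ceil_sum_ge (h - kappa) ltac:(lia)).
  lia.
Qed.

End Tetrahedron.

Theorem corollary2p6 (x1 x2 x3 x4 : pt) (l1 l2 l3 l4 : Z) :
  fano_tetrahedron x1 x2 x3 x4 ->
  (0 <= l1)%Z -> (0 <= l2)%Z -> (0 <= l3)%Z -> (0 <= l4)%Z ->
  Z.gcd (Z.gcd (Z.gcd l1 l2) l3) l4 = 1%Z ->
  (l1 * cx x1 + l2 * cx x2 + l3 * cx x3 + l4 * cx x4 = 0)%Z ->
  (l1 * cy x1 + l2 * cy x2 + l3 * cy x3 + l4 * cy x4 = 0)%Z ->
  (l1 * cz x1 + l2 * cz x2 + l3 * cz x3 + l4 * cz x4 = 0)%Z ->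
  let h := (l1 + l2 + l3 + l4)%Z in
  (forall kappa : Z, (2 <= kappa <= h - 2)%Z ->
     (ceil_frac (kappa * l1) h + ceil_frac (kappa * l2) h
      + ceil_frac (kappa * l3) h + ceil_frac (kappa * l4) h = kappa + 2)%Z) /\
  Z.gcd l1 h = 1%Z /\ Z.gcd l2 h = 1%Z /\ Z.gcd l3 h = 1%Z /\ Z.gcd l4 h = 1%Z.
Proof.
  intros (Hnd & Hint & Hlat) P1 P2 P3 P4 Hprim Lx Ly Lz h.
  assert (Hrel : is_relation x1 x2 x3 x4 l1 l2 l3 l4) by (repeat split; assumption).
  destruct (relation_pos_of_interior x1 x2 x3 x4 Hnd l1 l2 l3 l4 Hrel Hprim P1 P2 P3 P4 Hint)
    as (Q1 & Q2 & Q3 & Q4).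
  split.
  - exact (ceil_sum_eq x1 x2 x3 x4 Hnd l1 l2 l3 l4 Hrel Hprim P1 P2 P3 P4 Hlat).
  - pose proof (ceil_complement_eq x1 x2 x3 x4 Hnd l1 l2 l3 l4 Hrel Hprim P1 P2 P3 P4 Hlat)
      as Hcompl.
    repeat split; apply gcd_eq1_of_ceil_complement; try (unfold h; lia);
      intros k Hk; apply (Hcompl k Hk).
Qed.
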